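(* Let $\varphi,\psi:\mathbb{H}\to\mathbb{H}$ be linear isometries with $\varphi(1)=1$. The algebra $\mathbb{H}\times\mathbb{H}_{(\varphi,\psi)}$ satisfies $(z^2,z^2,z^2)=0$ for all $z$ if and only if (i) $\varphi(\varphi(x)x)=\varphi(x)x$ for all $x\in\mathbb{H}$, (ii) $\varphi(\bar x\psi(x))=\bar x\psi(x)$ for all $x\in\mathbb{H}$, (iii) $\psi(\psi(y)\bar x+y\varphi(x))=\psi(y)\bar x+y\varphi(x)$ for all $x,y\in\mathbb{H}$.
   Context: $(a,b,c)=(ab)c-a(bc)$. On $\mathbb{H}\times\mathbb{H}$ the Cayley–Dickson product is $(x,y)\bullet(u,v)=(xu-\bar v y,\ y\bar u+vx)$. $\mathbb{H}\times\mathbb{H}_{(\varphi,\psi)}$ denotes $\mathbb{H}\times\mathbb{H}$ with product $(x,y)\odot(u,v)=(\varphi(x),\psi(y))\bullet(u,v)$ and norm $\|(x,y)\|^2=|x|^2+|y|^2$; it has left unit $(1,0)$. *)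

From mathcomp Require Import all_boot all_order all_algebra.
From mathcomp Require Import reals.
Set Implicit Arguments. Unset Strict Implicit. Unset Printing Implicit Defensive.
Import Order.TTheory GRing.Theory Num.Theory.
Local Open Scope ring_scope.

(* Real quaternions H = R^4 with basis 1, i, j, k (Hamilton product). *)
Record quat (R : Type) := Quat { q0 : R; q1 : R; q2 : R; q3 : R }.

Section Quat.
Variable R : realType.
Definition qzero : quat R := Quat 0 0 0 0.
Definition qone : quat R := Quat 1 0 0 0.
Definition qadd (x y : quat R) : quat R :=
  Quat (q0 x + q0 y) (q1 x + q1 y) (q2 x + q2 y) (q3 x + q3 y).
Definition qopp (x : quat R) : quat R := Quat (- q0 x) (- q1 x) (- q2 x) (- q3 x).
Definition qsub (x y : quat R) : quat R := qadd x (qopp y).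
Definition qscale (a : R) (x : quat R) : quat R :=
  Quat (a * q0 x) (a * q1 x) (a * q2 x) (a * q3 x).
Definition qconj (x : quat R) : quat R := Quat (q0 x) (- q1 x) (- q2 x) (- q3 x).
Definition qmul (x y : quat R) : quat R :=
  Quat (q0 x * q0 y - q1 x * q1 y - q2 x * q2 y - q3 x * q3 y)
       (q0 x * q1 y + q1 x * q0 y + q2 x * q3 y - q3 x * q2 y)
       (q0 x * q2 y - q1 x * q3 y + q2 x * q0 y + q3 x * q1 y)
       (q0 x * q3 y + q1 x * q2 y - q2 x * q1 y + q3 x * q0 y).
Definition qnorm (x : quat R) : R :=
  Num.sqrt (q0 x ^+ 2 + q1 x ^+ 2 + q2 x ^+ 2 + q3 x ^+ 2).

Definition qlinear (f : quat R -> quat R) : Prop :=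
  forall (a b : R) (x y : quat R),
    f (qadd (qscale a x) (qscale b y)) = qadd (qscale a (f x)) (qscale b (f y)).
Definition qisometry (f : quat R -> quat R) : Prop :=
  forall x, qnorm (f x) = qnorm x.

(* H x H with the Cayley-Dickson product
   (x,y) . (u,v) = (xu - conj(v) y, y conj(u) + v x) *)
Definition cd_mul (p q : quat R * quat R) : quat R * quat R :=
  (qsub (qmul p.1 q.1) (qmul (qconj q.2) p.2),
   qadd (qmul p.2 (qconj q.1)) (qmul q.2 p.1)).
Definition psub (p q : quat R * quat R) : quat R * quat R :=
  (qsub p.1 q.1, qsub p.2 q.2).

Definition twmul (phi psi : quat R -> quat R) (p q : quat R * quat R) :=
  cd_mul (phi p.1, psi p.2) q.

Definition twassoc phi psi (a b c : quat R * quat R) :=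
  psub (twmul phi psi (twmul phi psi a b) c) (twmul phi psi a (twmul phi psi b c)).

Definition twsq phi psi (z : quat R * quat R) := twmul phi psi z z.
End Quat.

From mathcomp Require Import all_boot all_order all_algebra.
From mathcomp Require Import reals ring lra.

(* The condition (z^2, z^2, z^2) = 0 says exactly that every square is fixed by
   (phi, psi), and conditions (i)-(iii) spell out that the square of (x, y) is
   fixed.  One direction is clear: on fixed points the twisted product is the
   Cayley-Dickson product, which is power-associative.  Conversely, if
   (w, w, w) = 0, put u = (phi w.1, psi w.2) and c = u w; the left alternative
   law rewrites the associator as ((phi c.1, psi c.2) - u u) w, so for w <> 0 the
   first component of (phi c.1, psi c.2) - u u vanishes.  Comparing real parts,
   which phi preserves, gives |phi a - a|^2 + |psi b - b|^2 = 0 for w = (a, b). *)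

Set Implicit Arguments. Unset Strict Implicit. Unset Printing Implicit Defensive.
Import Order.TTheory GRing.Theory Num.Theory.
Local Open Scope ring_scope.

Section Quaternions.
Variable R : realType.
Implicit Types (x y a b : quat R) (p q w : quat R * quat R).

Local Notation pzero := (qzero R, qzero R).

Lemma quat_ext x y :
  q0 x = q0 y -> q1 x = q1 y -> q2 x = q2 y -> q3 x = q3 y -> x = y.
Proof. by case: x => ????; case: y => ???? /= -> -> -> ->. Qed.

Lemma pair_ext p q : p.1 = q.1 -> p.2 = q.2 -> p = q.
Proof. by case: p; case: q => ???? /= -> ->. Qed.

Ltac quat_ring := apply: quat_ext => /=; ring.
Ltac pair_ring := apply: pair_ext => /=; quat_ring.

Lemma qscale1 x : qscale 1 x = x. Proof. quat_ring. Qed.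
Lemma qscale0 x : qscale 0 x = qzero R. Proof. quat_ring. Qed.
Lemma qaddr0 x : qadd x (qzero R) = x. Proof. quat_ring. Qed.
Lemma qscaleA c d x : qscale c (qscale d x) = qscale (c * d) x. Proof. quat_ring. Qed.
Lemma qscaler0 c : qscale c (qzero R) = qzero R. Proof. quat_ring. Qed.
Lemma qoppE x : qopp x = qscale (-1) x. Proof. quat_ring. Qed.
Lemma qmul0l x : qmul (qzero R) x = qzero R. Proof. quat_ring. Qed.
Lemma qmulr0 x : qmul x (qzero R) = qzero R. Proof. quat_ring. Qed.
Lemma qconj0 : qconj (qzero R) = qzero R. Proof. quat_ring. Qed.
Lemma qsubr0 x : qsub x (qzero R) = x. Proof. quat_ring. Qed.
Lemma qsub0l x : qsub (qzero R) x = qopp x. Proof. quat_ring. Qed.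

Lemma qoppK x : qopp (qopp x) = x. Proof. quat_ring. Qed.
Lemma qsubK x y : qadd (qsub x y) y = x. Proof. quat_ring. Qed.
Lemma qadd0l x : qadd (qzero R) x = x. Proof. quat_ring. Qed.

Lemma qopp_inj : injective (@qopp R).
Proof. by move=> x y e; rewrite -[x]qoppK e qoppK. Qed.

Lemma qsub_eq0 x y : qsub x y = qzero R -> x = y.
Proof. by move=> e; rewrite -(qsubK x y) e qadd0l. Qed.

Lemma qscale_eq0 c x : c != 0 -> qscale c x = qzero R -> x = qzero R.
Proof. by move=> c0 e; rewrite -(qscale1 x) -(mulVf c0) -qscaleA e qscaler0. Qed.

Definition qnorm2 x := q0 x ^+ 2 + q1 x ^+ 2 + q2 x ^+ 2 + q3 x ^+ 2.
Definition qdot x y := q0 x * q0 y + q1 x * q1 y + q2 x * q2 y + q3 x * q3 y.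

Lemma qnorm2_ge0 x : 0 <= qnorm2 x.
Proof. by rewrite /qnorm2 !addr_ge0 ?sqr_ge0. Qed.

Lemma qnorm2_eq0 x : qnorm2 x = 0 -> x = qzero R.
Proof.
rewrite /qnorm2 => e.
have := sqr_ge0 (q0 x); have := sqr_ge0 (q1 x).
have := sqr_ge0 (q2 x); have := sqr_ge0 (q3 x) => *.
by apply: quat_ext; apply/eqP; rewrite -sqrf_eq0; apply/eqP; lra.
Qed.

Lemma sqr_qnorm x : qnorm x ^+ 2 = qnorm2 x.
Proof. exact/sqr_sqrtr/qnorm2_ge0. Qed.

Lemma qnorm2D x y : qnorm2 (qadd x y) = qnorm2 x + qnorm2 y + 2 * qdot x y.
Proof. rewrite /qnorm2 /qdot /=; ring. Qed.

Lemma qnorm2_sub_re_mul a a' b b' :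
  q0 a' = q0 a -> qnorm2 a' = qnorm2 a -> qnorm2 b' = qnorm2 b ->
  qnorm2 (qsub a' a) + qnorm2 (qsub b' b)
  = 2 * (q0 (qsub (qmul a' a) (qmul (qconj b) b'))
         - q0 (qsub (qmul a' a') (qmul (qconj b') b'))).
Proof. by rewrite /qnorm2 /= => ->; lra. Qed.

Lemma eq_of_re_mul a a' b b' :
  q0 a' = q0 a -> qnorm2 a' = qnorm2 a -> qnorm2 b' = qnorm2 b ->
  q0 (qsub (qmul a' a) (qmul (qconj b) b'))
  = q0 (qsub (qmul a' a') (qmul (qconj b') b')) ->
  a' = a /\ b' = b.
Proof.
move=> re_a norm_a norm_b re_eq.
have := qnorm2_sub_re_mul re_a norm_a norm_b; rewrite re_eq subrr mulr0 => sum0.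
have := qnorm2_ge0 (qsub a' a); have := qnorm2_ge0 (qsub b' b) => *.
by split; apply/qsub_eq0/qnorm2_eq0; lra.
Qed.

Definition cd_conj w := (qconj w.1, qopp w.2).
Definition cd_norm2 w := qnorm2 w.1 + qnorm2 w.2.

Lemma psubxx p : psub p p = pzero.
Proof. pair_ring. Qed.

Lemma cd_mul0l w : cd_mul pzero w = pzero.
Proof. pair_ring. Qed.

Lemma cd_mulBl p q w : cd_mul (psub p q) w = psub (cd_mul p w) (cd_mul q w).
Proof. pair_ring. Qed.

Lemma cd_mul_alternative_l p w : cd_mul (cd_mul p p) w = cd_mul p (cd_mul p w).
Proof. pair_ring. Qed.

Lemma cd_mul_conj_r_fst p w :
  (cd_mul (cd_mul p w) (cd_conj w)).1 = qscale (cd_norm2 w) p.1.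
Proof. rewrite /cd_norm2 /qnorm2; quat_ring. Qed.

Lemma cd_mul_eq0_fst p w : cd_mul p w = pzero -> cd_norm2 w != 0 -> p.1 = qzero R.
Proof.
move=> pw0 /qscale_eq0; apply; have := cd_mul_conj_r_fst p w.
by rewrite pw0 cd_mul0l.
Qed.

Section QLinear.
Variable f : quat R -> quat R.
Hypothesis f_lin : qlinear f.

Lemma qlinearD x y : f (qadd x y) = qadd (f x) (f y).
Proof. by have := f_lin 1 1 x y; rewrite !qscale1. Qed.

Lemma qlinearZ c x : f (qscale c x) = qscale c (f x).
Proof. by have := f_lin c 0 x x; rewrite !qscale0 !qaddr0. Qed.

Lemma qlinear0 : f (qzero R) = qzero R.
Proof. by rewrite -(qscale0 (qzero R)) qlinearZ !qscale0. Qed.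

Lemma qlinearN x : f (qopp x) = qopp (f x).
Proof. by rewrite !qoppE qlinearZ. Qed.

Lemma qlinearB x y : f (qsub x y) = qsub (f x) (f y).
Proof. by rewrite /qsub qlinearD qlinearN. Qed.

Hypothesis f_iso : qisometry f.

Lemma qisometry_norm2 x : qnorm2 (f x) = qnorm2 x.
Proof. by rewrite -!sqr_qnorm f_iso. Qed.

Lemma qisometry_dot x y : qdot (f x) (f y) = qdot x y.
Proof.
have := qisometry_norm2 (qadd x y).
by rewrite qlinearD !qnorm2D !qisometry_norm2; lra.
Qed.

Lemma qisometry_re : f (qone R) = qone R -> forall x, q0 (f x) = q0 x.
Proof. by move=> f1 x; have := qisometry_dot x (qone R); rewrite f1 /qdot /=; lra. Qed.

End QLinear.

Section Twisted.
Variables phi psi : quat R -> quat R.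

Definition twfixed p := phi p.1 = p.1 /\ psi p.2 = p.2.

Lemma twmul_fixed p q : twfixed p -> twmul phi psi p q = cd_mul p q.
Proof. by case: p => x y [/= phi_x psi_y]; rewrite /twmul /= phi_x psi_y. Qed.

Lemma twassoc_fixed p :
  twfixed p -> twfixed (twsq phi psi p) -> twassoc phi psi p p p = pzero.
Proof.
move=> fix_p fix_sq.
rewrite /twassoc -/(twsq phi psi p) !twmul_fixed // /twsq twmul_fixed //.
by rewrite cd_mul_alternative_l psubxx.
Qed.

Hypotheses (phi_lin : qlinear phi) (psi_lin : qlinear psi).

Lemma twsq_fixed_iff :
  (forall z, twfixed (twsq phi psi z)) <->
  ((forall x, phi (qmul (phi x) x) = qmul (phi x) x) /\
   (forall x, phi (qmul (qconj x) (psi x)) = qmul (qconj x) (psi x)) /\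
   (forall x y, psi (qadd (qmul (psi y) (qconj x)) (qmul y (phi x)))
                = qadd (qmul (psi y) (qconj x)) (qmul y (phi x)))).
Proof.
split=> [sq_fixed | [fix_i [fix_ii fix_iii]] [x y]].
- split; [|split].
  + move=> x; have [/= + _] := sq_fixed (x, qzero R).
    by rewrite (qlinear0 psi_lin) qconj0 qmul0l qsubr0.
  + move=> x; have [/= + _] := sq_fixed (qzero R, x).
    by rewrite (qlinear0 phi_lin) qmulr0 qsub0l (qlinearN phi_lin) => /qopp_inj.
  + by move=> x y; have [_ /=] := sq_fixed (x, y).
- split=> /=; last exact: fix_iii.
  by rewrite (qlinearB phi_lin) fix_i fix_ii.
Qed.

Hypotheses (phi_iso : qisometry phi) (psi_iso : qisometry psi).
Hypothesis phi1 : phi (qone R) = qone R.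

Lemma twassoc_eq0_fixed w : twassoc phi psi w w w = pzero -> twfixed w.
Proof.
case: w => a b assoc0.
have [norm0 | norm_neq0] := eqVneq (cd_norm2 (a, b)) 0.
  have := qnorm2_ge0 a; have := qnorm2_ge0 b; rewrite /cd_norm2 /= in norm0 => *.
  have -> : a = qzero R by apply: qnorm2_eq0; lra.
  have -> : b = qzero R by apply: qnorm2_eq0; lra.
  by split; rewrite /= (qlinear0 phi_lin, qlinear0 psi_lin).
set u := (phi a, psi b); set c := cd_mul u (a, b).
have : cd_mul (psub (phi c.1, psi c.2) (cd_mul u u)) (a, b) = pzero.
  by rewrite cd_mulBl cd_mul_alternative_l.
move=> /cd_mul_eq0_fst /(_ norm_neq0) /= /qsub_eq0 /(congr1 (@q0 R)).
rewrite qisometry_re // => re_eq.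
apply: eq_of_re_mul re_eq; first exact: qisometry_re.
all: exact: qisometry_norm2.
Qed.

End Twisted.
End Quaternions.

Theorem proposition6 (R : realType) (phi psi : quat R -> quat R) :
  qlinear phi -> qisometry phi -> qlinear psi -> qisometry psi ->
  phi (qone R) = qone R ->
  ((forall z : quat R * quat R,
      twassoc phi psi (twsq phi psi z) (twsq phi psi z) (twsq phi psi z)
      = (qzero R, qzero R))
   <->
   ((forall x, phi (qmul (phi x) x) = qmul (phi x) x) /\
    (forall x, phi (qmul (qconj x) (psi x)) = qmul (qconj x) (psi x)) /\
    (forall x y, psi (qadd (qmul (psi y) (qconj x)) (qmul y (phi x)))
                 = qadd (qmul (psi y) (qconj x)) (qmul y (phi x))))).
Proof.
move=> phi_lin phi_iso psi_lin psi_iso phi1.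
rewrite -(twsq_fixed_iff phi_lin psi_lin).
split=> [assoc0 z | sq_fixed z].
- exact: twassoc_eq0_fixed (assoc0 z).
- exact: twassoc_fixed.
Qed.
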